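(* Let $G\sim\mathrm{ER}(n,p)$, $\varepsilon\in[0,1/2)$, $\delta>0$. Consider the 2-path voting estimator: fix a center vertex $c$, set $\hat x_c=0$, and for each $v\ne c$, for each $k\notin\{c,v\}$ such that both $(c,k)$ and $(k,v)$ are edges of $G$, record the vote $Y_{(c,k)}\oplus Y_{(k,v)}$; set $\hat x_v$ to the value receiving strictly more votes (a tie counts as failure). If $$\frac{(n-2)p^2(1-2\varepsilon)^4/2}{1+\frac13\left(1+p^2(1-2\varepsilon)^2\right)(1-2\varepsilon)^2}\ \ge\ (1+\delta)\log n,$$ then with probability at least $1-n^{-\delta}$ the estimator satisfies $\hat x\in\{x,x\oplus1^n\}$.
   Context: Model: $G=(V,E)$ with $V=[n]$ drawn from $\mathrm{ER}(n,p)$ (each edge present independently with probability $p$); unknown $x\in\{0,1\}^n$; for each edge $(i,j)$ one observes $Y_{(i,j)}=x_i\oplus x_j\oplus Z_{(i,j)}$ (mod 2) with $Z_{(i,j)}$ i.i.d. Bernoulli$(\varepsilon)$ independent of $G$. Logarithms are natural. *)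

From Stdlib Require Import Reals.
From mathcomp Require Import all_boot.
Set Implicit Arguments. Unset Strict Implicit. Unset Printing Implicit Defensive.

Definition fsumR (T : finType) (f : T -> R) : R :=
  foldr (fun t acc => Rplus (f t) acc) R0 (enum T).
Definition fprodR (T : finType) (f : T -> R) : R :=
  foldr (fun t acc => Rmult (f t) acc) R1 (enum T).

(* Sample space: for each ordered pair (i,j) with i < j, a pair
   (edge present in G, noise bit Z_(i,j)).  Entries with ~(i<j) are dummies,
   forced to (false,false) by the weight. *)
Definition Omega (n : nat) := {ffun 'I_n * 'I_n -> bool * bool}.

(* Probability weight of an outcome: G ~ ER(n,p), Z iid Bernoulli(eps),
   independent of G. *)
Definition weight (n : nat) (p eps : R) (w : Omega n) : R :=
  fprodR (fun ij : 'I_n * 'I_n =>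
    if (ij.1 < ij.2)%N then
      Rmult (if (w ij).1 then p else Rminus 1 p) (if (w ij).2 then eps else Rminus 1 eps)
    else if w ij == (false, false) then R1 else R0).

Definition Prob (n : nat) (p eps : R) (E : Omega n -> bool) : R :=
  fsumR (fun w : Omega n => if E w then weight p eps w else R0).

Definition key (n : nat) (i j : 'I_n) : 'I_n * 'I_n :=
  if (i < j)%N then (i, j) else (j, i).

Definition edge (n : nat) (w : Omega n) (i j : 'I_n) : bool :=
  (i != j) && (w (key i j)).1.

(* Observation Y_(i,j) = x_i xor x_j xor Z_(i,j) (only meaningful on edges). *)
Definition obs (n : nat) (x : 'I_n -> bool) (w : Omega n) (i j : 'I_n) : bool :=
  xorb (xorb (x i) (x j)) (w (key i j)).2.

Definition votes (n : nat) (x : 'I_n -> bool) (w : Omega n) (c v : 'I_n) (b : bool)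
  : nat :=
  #|[pred k : 'I_n | [&& k != c, k != v, edge w c k, edge w k v &
                       xorb (obs x w c k) (obs x w k v) == b]]|.

Definition estimator (n : nat) (x : 'I_n -> bool) (w : Omega n) (c : 'I_n)
  : option {ffun 'I_n -> bool} :=
  if [forall v : 'I_n, (v == c) || (votes x w c v true != votes x w c v false)]
  then Some [ffun v : 'I_n => if v == c then false
                              else (votes x w c v false < votes x w c v true)%N]
  else None.

Definition success (n : nat) (x : 'I_n -> bool) (c : 'I_n) (w : Omega n) : bool :=
  (estimator x w c == Some [ffun v => x v])
  || (estimator x w c == Some [ffun v => negb (x v)]).

From Stdlib Require Import Reals Lra.
From mathcomp Require Import all_boot.
From HB Require Import structures.
Set Implicit Arguments. Unset Strict Implicit. Unset Printing Implicit Defensive.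
Local Open Scope R_scope.

(* Chernoff bound at each vertex, then a union bound.  Weight every 2-path
   c - k - v by r = 1 + (1 - 2 eps)^2 if its vote is wrong and by 1/r if it is
   right; when the majority at v fails, the product of these weights is >= 1,
   so P(failure at v) is at most its mean.  The n - 2 paths through v use
   pairwise distinct edges, hence their weights are independent, each of mean
   1 - p^2 (1 - 2 eps)^4 / 2 <= exp (- p^2 (1 - 2 eps)^4 / 2).  Summing over the
   n - 1 vertices v != c and using the hypothesis (whose denominator is >= 1)
   bounds the failure probability by n^(-delta). *)

Lemma RplusA : associative Rplus. Proof. by move=> *; rewrite Rplus_assoc. Qed.
Lemma RmultA : associative Rmult. Proof. by move=> *; rewrite Rmult_assoc. Qed.
Lemma RmultDl : left_distributive Rmult Rplus.
Proof. by move=> *; rewrite Rmult_plus_distr_r. Qed.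
Lemma RmultDr : right_distributive Rmult Rplus.
Proof. by move=> *; rewrite Rmult_plus_distr_l. Qed.

HB.instance Definition _ := Monoid.isComLaw.Build R R0 Rplus RplusA Rplus_comm Rplus_0_l.
HB.instance Definition _ := Monoid.isComLaw.Build R R1 Rmult RmultA Rmult_comm Rmult_1_l.
HB.instance Definition _ := Monoid.isMulLaw.Build R R0 Rmult Rmult_0_l Rmult_0_r.
HB.instance Definition _ := Monoid.isAddLaw.Build R Rmult Rplus RmultDl RmultDr.

Notation "\sum_ ( i | P ) F" := (\big[Rplus/R0]_(i | P) F) : R_scope.
Notation "\sum_ i F" := (\big[Rplus/R0]_i F) : R_scope.
Notation "\prod_ ( i <- r ) F" := (\big[Rmult/R1]_(i <- r) F) : R_scope.
Notation "\prod_ ( i | P ) F" := (\big[Rmult/R1]_(i | P) F) : R_scope.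
Notation "\prod_ i F" := (\big[Rmult/R1]_i F) : R_scope.

Lemma foldr_enum_big (T : finType) (op : R -> R -> R) (idx : R) (f : T -> R) :
  foldr (fun t acc => op (f t) acc) idx (enum T) = \big[op/idx]_(t : T) f t.
Proof. by rewrite unlock [index_enum _]unlock -enumT; elim: (enum T) => //= a l ->. Qed.

Lemma fsumRE (T : finType) (f : T -> R) : fsumR f = \sum_t f t.
Proof. exact: foldr_enum_big. Qed.

Lemma fprodRE (T : finType) (f : T -> R) : fprodR f = \prod_t f t.
Proof. exact: foldr_enum_big. Qed.

Lemma card_count (T : finType) (P : pred T) : #|P| = count P (enum T).
Proof. by rewrite cardE enumT /enum_mem size_filter; apply: eq_count. Qed.

Lemma sum_constR (T : finType) (P : pred T) (a : R) :
  \sum_(i | P i) a = INR #|P| * a.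
Proof.
rewrite big_const_seq [index_enum _]unlock -enumT -card_count.
elim: #|P| => [|k IH]; first by rewrite /=; ring.
by rewrite iterS IH S_INR; ring.
Qed.

Lemma sum_ge0 (T : finType) (P : pred T) (F : T -> R) :
  (forall i, P i -> 0 <= F i) -> 0 <= \sum_(i | P i) F i.
Proof. by move=> F_ge0; elim/big_ind: _ => // *; lra. Qed.

Lemma sum_le (T : finType) (P : pred T) (F G : T -> R) :
  (forall i, P i -> F i <= G i) -> \sum_(i | P i) F i <= \sum_(i | P i) G i.
Proof. by move=> leFG; elim/big_ind2: _ => // *; lra. Qed.

Section ProductWeight.

Variables (I T : finType) (g : I -> T -> R).

Definition prod_weight (w : {ffun I -> T}) : R := \prod_i g i (w i).

Definition expect (F : {ffun I -> T} -> R) : R := \sum_w prod_weight w * F w.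

Definition ffun_set (w : {ffun I -> T}) (i0 : I) (t : T) : {ffun I -> T} :=
  [ffun i => if i == i0 then t else w i].

Lemma ffun_set_eq w i0 t : ffun_set w i0 t i0 = t.
Proof. by rewrite ffunE eqxx. Qed.

Lemma ffun_set_ne w i0 t i : i != i0 -> ffun_set w i0 t i = w i.
Proof. by rewrite ffunE => /negbTE ->. Qed.

Lemma ffun_set_id w i0 t : ffun_set (ffun_set w i0 t) i0 (w i0) = w.
Proof. by apply/ffunP => i; rewrite !ffunE; case: eqP => [->|]. Qed.

Lemma eq_expect (F G : {ffun I -> T} -> R) : (forall w, F w = G w) -> expect F = expect G.
Proof. by move=> eqFG; apply: eq_bigr => w _; rewrite eqFG. Qed.

Lemma expectZ a F : expect (fun w => a * F w) = a * expect F.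
Proof. by rewrite /expect big_distrr /=; apply: eq_bigr => w _; ring. Qed.

Lemma expect_sum (J : finType) (P : pred J) (F : J -> {ffun I -> T} -> R) :
  expect (fun w => \sum_(j | P j) F j w) = \sum_(j | P j) expect (F j).
Proof.
rewrite /expect (eq_bigr (fun w => \sum_(j | P j) prod_weight w * F j w)).
  exact: exchange_big.
by move=> w _; rewrite big_distrr.
Qed.

Lemma expect_le F G :
  (forall i t, 0 <= g i t) -> (forall w, F w <= G w) -> expect F <= expect G.
Proof.
move=> g_ge0 leFG; apply: sum_le => w _; apply: Rmult_le_compat_l; last exact: leFG.
by rewrite /prod_weight; elim/big_ind: _ => //; [lra | exact: Rmult_le_pos].
Qed.

Hypothesis g_sum1 : forall i, \sum_t g i t = 1.

Lemma expect1 : expect (fun=> 1) = 1.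
Proof.
rewrite /expect (eq_bigr prod_weight) => [|w _]; last by rewrite Rmult_1_r.
by rewrite -bigA_distr_bigA big1.
Qed.

(* Swapping [w i0] with the integrated copy [t] preserves [prod_weight w * g i0 t]. *)
Lemma expect_marginal i0 (F : T -> {ffun I -> T} -> R) :
  (forall s w t, F s (ffun_set w i0 t) = F s w) ->
  expect (fun w => F (w i0) w) = expect (fun w => \sum_t g i0 t * F t w).
Proof.
move=> F_set.
pose W' w := \prod_(i | i != i0) g i (w i).
have prod_weightE w : prod_weight w = g i0 (w i0) * W' w.
  by rewrite /prod_weight (bigD1 i0).
have W'_set w t : W' (ffun_set w i0 t) = W' w.
  by apply: eq_bigr => i /ffun_set_ne ->.
pose swap (u : {ffun I -> T} * T) := (ffun_set u.1 i0 u.2, u.1 i0).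
have swapK : involutive swap by case=> w t; rewrite /swap /= ffun_set_eq ffun_set_id.
pose H (u : {ffun I -> T} * T) := prod_weight u.1 * (g i0 u.2 * F u.2 u.1).
have -> : expect (fun w => \sum_t g i0 t * F t w) = \sum_u H u.
  rewrite -(pair_bigA _ (fun w t => H (w, t))) /expect.
  by apply: eq_bigr => w _; rewrite big_distrr.
rewrite (reindex_inj (inv_inj swapK)) -(pair_bigA _ (fun w t => H (swap (w, t)))) /expect.
apply: eq_bigr => w _; rewrite -[LHS]Rmult_1_r -(g_sum1 i0) big_distrr.
apply: eq_bigr => t _; rewrite /H /swap /= !prod_weightE ffun_set_eq W'_set F_set; ring.
Qed.

End ProductWeight.

Definition pair_law (n : nat) (p eps : R) (ij : 'I_n * 'I_n) (t : bool * bool) : R :=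
  if (ij.1 < ij.2)%N then
    (if t.1 then p else 1 - p) * (if t.2 then eps else 1 - eps)
  else if t == (false, false) then 1 else 0.

Lemma sum_bool2 (F : bool * bool -> R) :
  \sum_t F t = F (true, true) + F (true, false) + (F (false, true) + F (false, false)).
Proof.
rewrite (eq_bigr (fun t => F (t.1, t.2))); last by case.
by rewrite -(pair_bigA _ (fun a b => F (a, b))) /= !big_bool /=; ring.
Qed.

Section EdgeNoiseLaw.

Variables (n : nat) (p eps : R).

Lemma pair_law_sum1 (ij : 'I_n * 'I_n) : \sum_t pair_law p eps ij t = 1.
Proof. by rewrite sum_bool2 /pair_law; case: ifP => _ /=; ring. Qed.

Lemma pair_law_ge0 ij t : 0 <= p <= 1 -> 0 <= eps <= 1 -> 0 <= @pair_law n p eps ij t.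
Proof.
move=> p01 eps01; rewrite /pair_law; case: ifP => _; last by case: ifP => _; lra.
by apply: Rmult_le_pos; case: ifP => _; lra.
Qed.

Lemma weight_prod_weight (w : Omega n) : weight p eps w = prod_weight (pair_law p eps) w.
Proof. by rewrite /weight fprodRE. Qed.

Lemma Prob_expect (E : pred (Omega n)) :
  Prob p eps E = 1 - expect (pair_law p eps) (fun w => if E w then 0 else 1).
Proof.
have mass_split : \sum_w (if E w then weight p eps w else R0)
    + expect (pair_law p eps) (fun w => if E w then 0 else 1) = 1.
  rewrite -[RHS](expect1 pair_law_sum1) /expect -big_split; apply: eq_bigr => w _ /=.
  by rewrite weight_prod_weight; case: (E w); simpl; ring.
by rewrite /Prob fsumRE; lra.
Qed.

End EdgeNoiseLaw.

Lemma key_inj n (i j i' j' : 'I_n) :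
  key i j = key i' j' -> (i = i' /\ j = j') \/ (i = j' /\ j = i').
Proof. by rewrite /key; case: ifP => _; case: ifP => _; case=> -> ->; tauto. Qed.

Lemma key_lt n (i j : 'I_n) : i != j -> ((key i j).1 < (key i j).2)%N.
Proof.
move=> neq_ij; rewrite /key; case: (ltngtP i j) => //= eq_ij.
by move: neq_ij; rewrite (val_inj eq_ij) eqxx.
Qed.

Lemma key_path_disjoint n (c v k k' : 'I_n) :
  c != v -> k != c -> k != v -> k' != c -> k' != v -> k' != k ->
  [&& key c k' != key c k, key k' v != key c k,
      key c k' != key k v & key k' v != key k v].
Proof.
move=> /eqP ? /eqP ? /eqP ? /eqP ? /eqP ? /eqP ?.
by apply/and4P; split; apply/eqP => /key_inj; intuition congruence.
Qed.

(* Exponential tilt of one 2-path vote: [r] for a wrong vote, [/ r] for a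
   correct one (the two noise bits agree), [1] if the path is absent. *)
Definition vote_tilt (r : R) (u1 u2 : bool * bool) : R :=
  if u1.1 && u2.1 then (if u1.2 == u2.2 then / r else r) else 1.

Definition path_tilt n (r : R) (c v k : 'I_n) (w : Omega n) : R :=
  if (k == c) || (k == v) then 1 else vote_tilt r (w (key c k)) (w (key k v)).

Definition tilt n (r : R) (c v : 'I_n) (s : seq 'I_n) (w : Omega n) : R :=
  \prod_(k <- s) path_tilt r c v k w.

(* A present path votes correctly with probability [q = (1 + a) / 2], [a = (1 - 2 eps)^2],
   and [q / (1 + a) + (1 - q) (1 + a) = 1 - a^2 / 2]. *)
Lemma expect_vote_tilt n (p eps : R) (ij ij' : 'I_n * 'I_n) :
  (ij.1 < ij.2)%N -> (ij'.1 < ij'.2)%N ->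
  \sum_t pair_law p eps ij t *
     \sum_t' pair_law p eps ij' t' * vote_tilt (1 + (1 - 2 * eps) ^ 2) t t'
  = 1 - p ^ 2 * (1 - 2 * eps) ^ 4 / 2.
Proof.
move=> lt_ij lt_ij'; rewrite !sum_bool2 /pair_law lt_ij lt_ij' /vote_tilt /=.
field; nra.
Qed.

Lemma tilt_set n r (c v : 'I_n) s w ij t :
  {in s, forall k, k != c -> k != v -> (key c k != ij) && (key k v != ij)} ->
  tilt r c v s (ffun_set w ij t) = tilt r c v s w.
Proof.
move=> s_avoid; apply: eq_big_seq => k /s_avoid; rewrite /path_tilt.
case: ifP => // /norP [kc kv] /(_ kc kv) /andP [ck_ij kv_ij].
by rewrite !ffun_set_ne.
Qed.

Lemma expect_vote_tilt_mul n (p eps : R) (ij ij' : 'I_n * 'I_n) (Q : Omega n -> R) :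
  ij != ij' -> (ij.1 < ij.2)%N -> (ij'.1 < ij'.2)%N ->
  (forall w t, Q (ffun_set w ij t) = Q w) -> (forall w t, Q (ffun_set w ij' t) = Q w) ->
  expect (pair_law p eps) (fun w => vote_tilt (1 + (1 - 2 * eps) ^ 2) (w ij) (w ij') * Q w)
  = (1 - p ^ 2 * (1 - 2 * eps) ^ 4 / 2) * expect (pair_law p eps) Q.
Proof.
set r := 1 + _ => ij_ij' lt_ij lt_ij' Q_ij Q_ij'.
have := expect_marginal (@pair_law_sum1 n p eps) (i0 := ij')
  (F := fun t w => vote_tilt r (w ij) t * Q w).
rewrite /= => ->; last by move=> t' w t; rewrite ffun_set_ne // Q_ij'.
have := expect_marginal (@pair_law_sum1 n p eps) (i0 := ij)
  (F := fun t w => \sum_t' pair_law p eps ij' t' * (vote_tilt r t t' * Q w)).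
rewrite /= => ->; last by move=> t' w t; rewrite Q_ij.
rewrite -(expect_vote_tilt p eps lt_ij lt_ij') -/r -expectZ.
apply: eq_expect => w; rewrite big_distrl /=.
apply: eq_bigr => t _; rewrite Rmult_assoc big_distrl; congr (_ * _).
by apply: eq_bigr => t' _; simpl; ring.
Qed.

Lemma expect_tilt n (p eps : R) (c v : 'I_n) (s : seq 'I_n) :
  c != v -> uniq s ->
  expect (pair_law p eps) (tilt (1 + (1 - 2 * eps) ^ 2) c v s)
  = (1 - p ^ 2 * (1 - 2 * eps) ^ 4 / 2) ^ count (fun k => (k != c) && (k != v)) s.
Proof.
set r := 1 + _; move=> cv; elim: s => [_|k s IH] /=.
  by rewrite -(expect1 (@pair_law_sum1 n p eps)); apply: eq_expect => w; rewrite /tilt big_nil.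
case/andP=> ks uniq_s.
have tiltE w : tilt r c v (k :: s) w = path_tilt r c v k w * tilt r c v s w.
  by rewrite /tilt big_cons.
rewrite (eq_expect (pair_law p eps) tiltE) /path_tilt.
case kcv: ((k == c) || (k == v)); last case/norP: kcv => kc kv.
  by rewrite -negb_or kcv add0n -IH //; apply: eq_expect => w; rewrite Rmult_1_l.
rewrite kc kv add1n /= -IH //.
have s_avoid : {in s, forall k', k' != c -> k' != v ->
    [&& key c k' != key c k, key k' v != key c k, key c k' != key k v & key k' v != key k v]}.
  move=> k' k's k'c k'v; apply: key_path_disjoint => //.
  by apply: contraNneq ks => <-.
apply: expect_vote_tilt_mul.
- by apply/eqP => /key_inj; move: cv kc kv => /eqP ? /eqP ? /eqP ?; intuition congruence.
- by apply: key_lt; rewrite eq_sym.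
- exact: key_lt.
- by move=> w t; apply: tilt_set => k' /s_avoid k'_avoid /k'_avoid/[apply]/and4P [-> -> _ _].
- by move=> w t; apply: tilt_set => k' /s_avoid k'_avoid /k'_avoid/[apply]/and4P [_ _ -> ->].
Qed.

Section Votes.

Variables (n : nat) (x : 'I_n -> bool) (w : Omega n) (c : 'I_n).

Definition casts_vote (v : 'I_n) (b : bool) (k : 'I_n) : bool :=
  [&& k != c, k != v, edge w c k, edge w k v & xorb (obs x w c k) (obs x w k v) == b].

Lemma votesE v b : votes x w c v b = count (casts_vote v b) (enum 'I_n).
Proof. by rewrite /votes card_count. Qed.

Lemma path_tiltE r v k :
  path_tilt r c v k w =
  if casts_vote v (~~ xorb (x c) (x v)) k then r
  else if casts_vote v (xorb (x c) (x v)) k then / r else 1.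
Proof.
rewrite /path_tilt /casts_vote /edge /obs.
case: eqP => [->|/eqP kc] //=; case: eqP => [->|/eqP kv] //=.
rewrite eq_sym kc /vote_tilt /=.
case: (w (key c k)) => e1 z1; case: (w (key k v)) => e2 z2 /=.
by case: e1; case: e2; case: z1; case: z2; case: (x c); case: (x v); case: (x k).
Qed.

Lemma tilt_pow r v s :
  tilt r c v s w = r ^ count (casts_vote v (~~ xorb (x c) (x v))) s *
                   (/ r) ^ count (casts_vote v (xorb (x c) (x v))) s.
Proof.
elim: s => [|k s IH]; first by rewrite /tilt big_nil /=; ring.
rewrite /tilt big_cons -/(tilt r c v s w) IH path_tiltE /=.
case: ifP => wrong.
  have -> : casts_vote v (xorb (x c) (x v)) k = false.
    case/and5P: wrong => _ _ _ _ /eqP wrong.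
    by rewrite /casts_vote wrong; case: (xorb _ _); rewrite !andbF.
  by rewrite add1n add0n /=; ring.
by case: ifP => _; rewrite ?add1n !add0n /=; ring.
Qed.

Lemma tilt_ge0 r v s : 0 < r -> 0 <= tilt r c v s w.
Proof.
move=> r_gt0; rewrite /tilt; elim/big_ind: _ => [||k _]; [lra | exact: Rmult_le_pos|].
rewrite /path_tilt /vote_tilt; case: ifP => _; first lra.
case: ifP => _; last lra.
by case: ifP => _; [apply/Rlt_le/Rinv_0_lt_compat|]; lra.
Qed.

Lemma tilt_ge1 r v s :
  1 <= r ->
  (count (casts_vote v (xorb (x c) (x v))) s <= count (casts_vote v (~~ xorb (x c) (x v))) s)%N ->
  1 <= tilt r c v s w.
Proof.
move=> r_ge1 le_votes; rewrite tilt_pow -(subnK le_votes) pow_add.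
rewrite Rmult_assoc pow_inv Rinv_r; last by apply: pow_nonzero; lra.
by rewrite Rmult_1_r; apply: pow_R1_Rle.
Qed.

End Votes.

Lemma success_of_majority n (x : 'I_n -> bool) (c : 'I_n) (w : Omega n) :
  (forall v, v != c ->
     (votes x w c v (~~ xorb (x c) (x v)) < votes x w c v (xorb (x c) (x v)))%N) ->
  success x c w.
Proof.
move=> majority; rewrite /success /estimator.
case: ifP => [_|/negP []]; last first.
  apply/forallP => v; case: eqVneq => //= vc.
  by have := majority v vc; case: (xorb _ _) => /= lt_votes; rewrite neq_ltn lt_votes ?orbT.
case xc: (x c); apply/orP; [right|left]; apply/eqP; congr Some; apply/ffunP => v;
  rewrite !ffunE; (case: eqVneq => [->|vc]; first by rewrite xc);
  have := majority v vc; rewrite xc /=; case: (x v) => //= lt_votes;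
  by rewrite ltnNge (ltnW lt_votes).
Qed.

(* Pointwise form of Markov's inequality plus the union bound: at a failing
   vertex the wrong votes are at least the correct ones, so its tilt is >= 1. *)
Lemma failure_le_tilt_sum n (x : 'I_n -> bool) (c : 'I_n) (w : Omega n) r :
  1 <= r -> ~~ success x c w -> 1 <= \sum_(v | v != c) tilt r c v (enum 'I_n) w.
Proof.
move=> r_ge1 fail.
have [v /andP [vc no_majority]] : exists v, (v != c) &&
    ~~ (votes x w c v (~~ xorb (x c) (x v)) < votes x w c v (xorb (x c) (x v)))%N.
  apply/existsP; apply: contraR fail => /existsPn majority.
  by apply: success_of_majority => v vc; move: (majority v); rewrite vc negbK.
rewrite -leqNgt !votesE in no_majority.
rewrite (bigD1 v) //= -[1]Rplus_0_r; apply: Rplus_le_compat.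
  exact: tilt_ge1 r_ge1 no_majority.
by apply: sum_ge0 => u _; apply: tilt_ge0; lra.
Qed.

Lemma count_neq2 n (c v : 'I_n) :
  c != v -> count (fun k => (k != c) && (k != v)) (enum 'I_n) = (n - 2)%N.
Proof.
move=> cv; rewrite -card_count -[in RHS](card_ord n) -(cardC (pred2 c v)) card2 cv addKn.
by apply: eq_card => k; rewrite !inE negb_or.
Qed.

Lemma pow_1m_le_exp y k : 0 <= y <= 1 -> (1 - y) ^ k <= exp (- (INR k * y)).
Proof.
move=> y01.
have -> : - (INR k * y) = INR k * ln (exp (- y)) by rewrite ln_exp; ring.
rewrite -/(Rpower (exp (- y)) (INR k)) Rpower_pow; last exact: exp_pos.
by apply: pow_incr; have := exp_ineq1_le (- y); lra.
Qed.

Lemma tail_bound n (p eps delta : R) :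
  (0 < n)%N -> 0 <= p <= 1 -> 0 <= eps < 1 / 2 ->
  (INR n - 2) * p ^ 2 * (1 - 2 * eps) ^ 4 / 2
     / (1 + 1 / 3 * (1 + p ^ 2 * (1 - 2 * eps) ^ 2) * (1 - 2 * eps) ^ 2)
   >= (1 + delta) * ln (INR n) ->
  INR n.-1 * (1 - p ^ 2 * (1 - 2 * eps) ^ 4 / 2) ^ (n - 2) <= Rpower (INR n) (- delta).
Proof.
case: n => [//|[|k]] _ p01 eps01 hyp; first by rewrite /= Rmult_0_l; apply/Rlt_le/exp_pos.
rewrite !subSS subn0 [k.+2.-1]/=.
set N := INR k.+2 in hyp *; set a := (1 - 2 * eps) ^ 2 in hyp *.
have N_eq : N = INR k + 2 by rewrite /N !S_INR; ring.
have k_ge0 := pos_INR k.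
have a01 : 0 <= a <= 1 by rewrite /a; nra.
have p2_01 : 0 <= p ^ 2 <= 1 by nra.
have eps4 : (1 - 2 * eps) ^ 4 = a * a by rewrite /a; ring.
set y := p ^ 2 * (1 - 2 * eps) ^ 4 / 2.
have y01 : 0 <= y <= 1 by rewrite /y eps4; nra.
set D := 1 + _ in hyp.
have D_ge1 : 1 <= D by rewrite /D; nra.
have ky_ge : (1 + delta) * ln N <= INR k * y.
  have hyp_eq : (N - 2) * p ^ 2 * (1 - 2 * eps) ^ 4 / 2 / D = INR k * y / D.
    by rewrite N_eq /y; field; lra.
  rewrite hyp_eq in hyp; apply: Rle_trans (Rge_le _ _ hyp) _.
  rewrite /Rdiv -[X in _ <= X]Rmult_1_r; apply: Rmult_le_compat_l; first nra.
  by rewrite -Rinv_1; apply: Rinv_le_contravar; lra.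
have N_gt0 : 0 < N by lra.
have -> : Rpower N (- delta) = N * Rpower N (- (1 + delta)).
  by rewrite -{2}(Rpower_1 _ N_gt0) -Rpower_plus; congr Rpower; ring.
have tail : (1 - y) ^ k <= Rpower N (- (1 + delta)).
  apply: (Rle_trans _ _ _ (pow_1m_le_exp k y01)).
  have : - (INR k * y) <= - (1 + delta) * ln N by lra.
  by case/Rle_lt_or_eq_dec => [/exp_increasing/Rlt_le | ->] //; apply: Rle_refl.
have pow_ge0 : 0 <= (1 - y) ^ k by apply: pow_le; lra.
apply: Rmult_le_compat; [exact: pos_INR | exact: pow_ge0 | rewrite S_INR; lra | exact: tail].
Qed.

Theorem mainTheorem6 (n : nat) (p eps delta : R) (x : 'I_n -> bool) (c : 'I_n) :
  (0 <= p <= 1) ->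
  (0 <= eps < 1 / 2) ->
  (0 < delta) ->
  ((INR n - 2) * p ^ 2 * (1 - 2 * eps) ^ 4 / 2
     / (1 + 1 / 3 * (1 + p ^ 2 * (1 - 2 * eps) ^ 2) * (1 - 2 * eps) ^ 2)
   >= (1 + delta) * ln (INR n)) ->
  (Prob p eps (success x c) >= 1 - Rpower (INR n) (- delta)).
Proof.
move=> p01 eps01 _ hyp.
set r := 1 + (1 - 2 * eps) ^ 2.
have r_ge1 : 1 <= r by have := pow2_ge_0 (1 - 2 * eps); rewrite /r; lra.
have law_ge0 (ij : 'I_n * 'I_n) t : 0 <= pair_law p eps ij t by apply: pair_law_ge0; lra.
have n_gt0 : (0 < n)%N := leq_ltn_trans (leq0n c) (ltn_ord c).
have := tail_bound n_gt0 p01 eps01 hyp.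
suff : expect (pair_law p eps) (fun w => if success x c w then 0 else 1)
       <= INR n.-1 * (1 - p ^ 2 * (1 - 2 * eps) ^ 4 / 2) ^ (n - 2).
  by rewrite Prob_expect; lra.
have fail_le w : (if success x c w then 0 else 1)
    <= \sum_(v | v != c) tilt r c v (enum 'I_n) w.
  case: ifP => [_|/negbT]; last exact: failure_le_tilt_sum.
  by apply: sum_ge0 => v _; apply: tilt_ge0; lra.
apply: Rle_trans _ _ _ (expect_le law_ge0 fail_le) _.
rewrite expect_sum (eq_bigr (fun=> (1 - p ^ 2 * (1 - 2 * eps) ^ 4 / 2) ^ (n - 2))).
  by rewrite sum_constR cardC1 card_ord; apply: Rle_refl.
by move=> v vc; rewrite expect_tilt ?enum_uniq ?count_neq2 // eq_sym.
Qed.
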